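(* Consider the following model. A principal P and an agent A interact over two periods $t\in\{1,2\}$. States $\omega_t\in\{0,1\}$ satisfy $\Pr[\omega_1=1]=\mu_0\in(0,1)$ and $\Pr[\omega_2=\omega\mid\omega_1=\omega]=\rho\in(1/2,1)$. In each period A chooses $e_t\in\{0,1\}$; if $e_t=1$ he observes $\omega_t$, if $e_t=0$ he observes $\omega_t$ with probability $\pi\in(0,1)$ and nothing otherwise. A then reports $r_t\in\{\varnothing,\omega_t\}$ if he observed $\omega_t$, and $r_t=\varnothing$ otherwise. P chooses $x\in\{0,1\}$ at the end of period 2. Payoffs: P gets $\mathbb{1}[x=\omega_2]-k(e_1+e_2)$, A gets $x-c(e_1+e_2)$, $c,k>0$. A mechanism $m=(\sigma,\hat x)$ consists of $\sigma_1\in\{0,1\}$, $\sigma_2:\{\varnothing,0,1\}\to\{0,1\}$, $\hat x:\{\varnothing,0,1\}^2\to\{0,1\}$; P commits to it, and A best-responds, following the recommendation and disclosing when indifferent. A mechanism is incentive compatible (IC) if (i) at every history occurring with positive probability, A's optimal testing decision equals the recommendation (obedience); (ii) at every such history and after every observed result, A optimally reports the observed result (full disclosure); and (iii) it is forcing: for every $r_1$ with $\sigma_2(r_1)=1$ after which A would report $r_2=\varnothing$, $\hat x(r_1,\varnothing)=0$. Then for any mechanism $m$ there exists an IC mechanism $m'$ that generates the same outcomes (testing decisions, information revealed and assignments) as $m$. *)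

From HB Require Import structures.
From mathcomp Require Import all_boot all_order all_algebra.
Set Implicit Arguments. Unset Strict Implicit. Unset Printing Implicit Defensive.
Import Order.TTheory GRing.Theory Num.Theory.
Local Open Scope ring_scope.

(* States, testing decisions and assignments are bools (true = 1).
   Reports / observations are [option bool]: [None] = the empty report/observation. *)

Record mech := Mech {
  sig1 : bool;
  sig2 : option bool -> bool;
  xhat : option bool -> option bool -> bool
}.

Section Model.
Variables (R : realFieldType) (mu0 rho pi c : R).

Definition b2R (b : bool) : R := if b then 1 else 0.

Definition obsp (e : bool) : R := if e then 1 else pi.

Definition rep2 (m : mech) (r1 : option bool) (o2 : option bool) : option bool :=
  match o2 with
  | Some w => if b2R (xhat m r1 None) <= b2R (xhat m r1 (Some w)) then Some w else None
  | None => None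
  end.

(* A's belief Pr[omega_2 = 1 | own period-1 observation o1].  If o1 = None then
   A did not test (testing always reveals the state) and the non-observation is
   independent of the state, so the belief on omega_1 is the prior mu0. *)
Definition belief2 (o1 : option bool) : R :=
  match o1 with
  | Some true => rho
  | Some false => 1 - rho
  | None => mu0 * rho + (1 - mu0) * (1 - rho)
  end.

Definition prob2 (o1 : option bool) (w : bool) : R :=
  if w then belief2 o1 else 1 - belief2 o1.

(* A's expected continuation payoff in period 2 from testing decision e2,
   given own observation o1 and report r1 (anticipating optimal reporting). *)
Definition V2 (m : mech) (o1 r1 : option bool) (e2 : bool) : R :=
  prob2 o1 true * (obsp e2 * b2R (xhat m r1 (rep2 m r1 (Some true)))
                   + (1 - obsp e2) * b2R (xhat m r1 None))
  + prob2 o1 false * (obsp e2 * b2R (xhat m r1 (rep2 m r1 (Some false)))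
                   + (1 - obsp e2) * b2R (xhat m r1 None))
  - c * b2R e2.

Definition test2 (m : mech) (o1 r1 : option bool) : bool :=
  if sig2 m r1 then V2 m o1 r1 false <= V2 m o1 r1 true
  else V2 m o1 r1 false < V2 m o1 r1 true.

Definition W2 (m : mech) (o1 r1 : option bool) : R := V2 m o1 r1 (test2 m o1 r1).

Definition rep1 (m : mech) (o1 : option bool) : option bool :=
  match o1 with
  | Some w => if W2 m o1 None <= W2 m o1 (Some w) then Some w else None
  | None => None
  end.

Definition prior1 (w : bool) : R := if w then mu0 else 1 - mu0.

Definition V1 (m : mech) (e1 : bool) : R :=
  prior1 true * (obsp e1 * W2 m (Some true) (rep1 m (Some true))
                 + (1 - obsp e1) * W2 m None None)
  + prior1 false * (obsp e1 * W2 m (Some false) (rep1 m (Some false))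
                 + (1 - obsp e1) * W2 m None None)
  - c * b2R e1.

Definition test1 (m : mech) : bool :=
  if sig1 m then V1 m false <= V1 m true else V1 m false < V1 m true.

(* Outcome along the realization (w1, w2, u1, u2): w_t = omega_t, and u_t = true
   iff the state would be observed in period t without testing (prob. pi).
   Every realization has positive probability. *)
Definition outcome (m : mech) (w1 w2 u1 u2 : bool)
  : bool * option bool * bool * option bool * bool :=
  let e1 := test1 m in
  let o1 := if e1 || u1 then Some w1 else None in
  let r1 := rep1 m o1 in
  let e2 := test2 m o1 r1 in
  let o2 := if e2 || u2 then Some w2 else None in
  let r2 := rep2 m r1 o2 in
  (e1, o1, e2, o2, xhat m r1 r2).

(* Period-1 observation o1 occurs with positive probability. *)
Definition onpath1 (m : mech) (o1 : option bool) : bool :=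
  if o1 is None then ~~ test1 m else true.

Definition obedient (m : mech) : Prop :=
  test1 m = sig1 m /\
  forall o1, onpath1 m o1 -> test2 m o1 (rep1 m o1) = sig2 m (rep1 m o1).

Definition full_disclosure (m : mech) : Prop :=
  (forall w, rep1 m (Some w) = Some w) /\
  (forall o1 w, onpath1 m o1 -> rep2 m (rep1 m o1) (Some w) = Some w).

Definition forcing (m : mech) : Prop :=
  forall r1, sig2 m r1 = true -> xhat m r1 None = false.

Definition IC (m : mech) : Prop := obedient m /\ full_disclosure m /\ forcing m.

End Model.

(* The new mechanism recommends the tests A would run
   under [m], reads every report as A's observation, and assigns what [m] would
   assign after the reports A would make under [m], except that concealing a
   result after a recommended test is punished with [x = 0].  This leaves the
   payoff of A's original strategy unchanged and can only lower the payoff of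
   every deviation, so with ties broken towards the recommendation and towards
   disclosure A obeys and discloses, reproducing the outcomes of [m]. *)
From Pilot Require Import Defs.
From mathcomp Require Import all_boot all_order all_algebra lra.
Set Implicit Arguments. Unset Strict Implicit. Unset Printing Implicit Defensive.
Import Order.TTheory GRing.Theory Num.Theory.
Local Open Scope ring_scope.

Section BestChoice.
Variable R : realDomainType.

(* The better of two options valued [a] (false) and [b] (true), ties broken in
   favour of [s]: this is the decision rule of [test1] and [test2]. *)
Definition best_choice (s : bool) (a b : R) : bool := if s then a <= b else a < b.

Lemma best_choiceP s a b : if best_choice s a b then a <= b else b <= a.
Proof.
by rewrite /best_choice; case: s; [case: lerP | case: ltrP] => // /ltW.
Qed.

Lemma best_choice_max s (f : bool -> R) e :
  f e <= f (best_choice s (f false) (f true)).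
Proof.
by have := best_choiceP s (f false) (f true); case: best_choice; case: e.
Qed.

Lemma best_choice_stable s (f g : bool -> R) t :
  t = best_choice s (f false) (f true) -> g t = f t -> g (~~ t) <= f (~~ t) ->
  best_choice t (g false) (g true) = t.
Proof.
move=> ->; have := best_choiceP s (f false) (f true); rewrite /best_choice.
case: (if s then _ else _) => /= ft_ge gt gnt_le.
  by rewrite gt (le_trans gnt_le).
by apply/negbTE; rewrite -leNgt gt (le_trans gnt_le).
Qed.

End BestChoice.

Section DirectMechanism.
Variables (R : realFieldType) (mu0 rho pi c : R).
Hypotheses (hmu0 : 0 <= mu0 <= 1) (hrho : 0 <= rho <= 1) (hpi : 0 <= pi <= 1).

Local Notation V2 := (V2 mu0 rho pi c).
Local Notation test2 := (test2 mu0 rho pi c).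
Local Notation W2 := (W2 mu0 rho pi c).
Local Notation rep1 := (rep1 mu0 rho pi c).
Local Notation V1 := (V1 mu0 rho pi c).
Local Notation test1 := (test1 mu0 rho pi c).

Lemma ler_b2R (a b : bool) : (b2R R a <= b2R R b) = (a ==> b).
Proof. by case: a; case: b; rewrite /b2R ?lexx ?ler01 // leNgt ltr01. Qed.

Lemma prob2_ge0 o w : 0 <= prob2 mu0 rho o w.
Proof.
case/andP: hmu0 => mu0_ge0 mu0_le1; case/andP: hrho => rho_ge0 rho_le1.
by case: w; case: o => [[]|] /=; nra.
Qed.

Lemma le_V2 m m' o r r' e :
  (forall w, b2R R (xhat m r (rep2 R m r (Some w)))
             <= b2R R (xhat m' r' (rep2 R m' r' (Some w)))) ->
  b2R R (xhat m r None) <= b2R R (xhat m' r' None) ->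
  V2 m o r e <= V2 m' o r' e.
Proof.
move=> disclose_le conceal_le.
have [obsp_ge0 obsp_le1] : 0 <= obsp pi e /\ 0 <= 1 - obsp pi e.
  by case/andP: hpi; case: e; rewrite /obsp ?ler01 ?subrr ?subr_ge0.
rewrite /Defs.V2 lerD2r.
by apply: lerD; (apply: ler_wpM2l; first exact: prob2_ge0);
  apply: lerD; apply: ler_wpM2l.
Qed.

Lemma eq_V2 m m' o r r' e :
  (forall w, xhat m r (rep2 R m r (Some w))
             = xhat m' r' (rep2 R m' r' (Some w))) ->
  (~~ e -> xhat m r None = xhat m' r' None) ->
  V2 m o r e = V2 m' o r' e.
Proof.
move=> disclose_eq conceal_eq; rewrite /Defs.V2 !disclose_eq.
case: e conceal_eq => [_|/(_ isT) -> //].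
by rewrite /obsp subrr !mul0r.
Qed.

Lemma V2_le_W2 m o r e : V2 m o r e <= W2 m o r.
Proof. exact: (best_choice_max (sig2 m r) (V2 m o r)). Qed.

Lemma W2_rep1_ge m o : W2 m o None <= W2 m o (rep1 m o).
Proof. by case: o => [w|] /=; [case: ifP => // _|]; apply: lexx. Qed.

Lemma xhat_rep2_ge m r w : xhat m r None ==> xhat m r (rep2 R m r (Some w)).
Proof. by rewrite /rep2 ler_b2R; case: ifP => //; case: xhat. Qed.

(* Reports to [direct_mech m] are read as A's observations and translated
   into the reports A would make under [m]. *)
Definition direct_mech (m : mech) : mech :=
  Mech (test1 m)
       (fun o => test2 m o (rep1 m o))
       (fun o o2 => let r1 := rep1 m o in
          if o2 is Some w then xhat m r1 (rep2 R m r1 (Some w))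
          else ~~ test2 m o r1 && xhat m r1 None).

Variable m : mech.
Local Notation dm := (direct_mech m).

Lemma rep2_direct r w : rep2 R dm r (Some w) = Some w.
Proof.
rewrite /rep2 ler_b2R /=.
by case: (~~ _) => //=; rewrite xhat_rep2_ge.
Qed.

Lemma V2_direct_le o r e : V2 dm o r e <= V2 m o (rep1 m r) e.
Proof.
apply: le_V2 => [w|]; first by rewrite rep2_direct lexx.
by rewrite ler_b2R /=; case: (~~ _); rewrite ?implybb.
Qed.

Lemma V2_direct_eq o r e :
  ~~ test2 m r (rep1 m r) || e -> V2 dm o r e = V2 m o (rep1 m r) e.
Proof.
move=> untested_or_e; apply: eq_V2 => [w|not_e]; first by rewrite rep2_direct.
by move: untested_or_e; rewrite /= (negbTE not_e) orbF => ->.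
Qed.

Lemma test2_direct o : test2 dm o o = test2 m o (rep1 m o).
Proof.
change (best_choice (test2 m o (rep1 m o)) (V2 dm o o false) (V2 dm o o true)
        = test2 m o (rep1 m o)).
apply: (best_choice_stable (s := sig2 m (rep1 m o)) (f := V2 m o (rep1 m o))
          erefl).
  by rewrite V2_direct_eq // orNb.
exact: V2_direct_le.
Qed.

Lemma W2_direct o : W2 dm o o = W2 m o (rep1 m o).
Proof. by rewrite /Defs.W2 test2_direct V2_direct_eq // orNb. Qed.

Lemma rep1_direct o : rep1 dm o = o.
Proof.
case: o => [w|] //=; rewrite W2_direct.
have conceal_le : W2 dm (Some w) None <= W2 m (Some w) (rep1 m (Some w)).
  apply: le_trans (W2_rep1_ge m (Some w)).
  exact: le_trans (V2_direct_le _ _ _) (V2_le_W2 _ _ _ _).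
by rewrite conceal_le.
Qed.

Lemma V1_direct e : V1 dm e = V1 m e.
Proof. by rewrite /Defs.V1 !rep1_direct !W2_direct. Qed.

Lemma test1_direct : test1 dm = test1 m.
Proof.
change (best_choice (test1 m) (V1 dm false) (V1 dm true) = test1 m).
by apply: (best_choice_stable (s := sig1 m) (f := V1 m) erefl); rewrite V1_direct.
Qed.

Lemma direct_IC : IC mu0 rho pi c dm.
Proof.
split; [split|split; [split|]] => [| o1 _ | w | o1 w _ | r1 /= ->] //.
- exact: test1_direct.
- by rewrite rep1_direct test2_direct.
- exact: rep1_direct.
- by rewrite rep1_direct rep2_direct.
Qed.

Lemma direct_outcome w1 w2 u1 u2 :
  outcome mu0 rho pi c dm w1 w2 u1 u2 = outcome mu0 rho pi c m w1 w2 u1 u2.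
Proof.
rewrite /outcome test1_direct rep1_direct test2_direct.
by case e2: (test2 m _ _); case: u2; rewrite ?rep2_direct /= ?e2.
Qed.

End DirectMechanism.

Theorem proposition3 (R : realFieldType) (mu0 rho pi c k : R)
  (hmu0 : 0 < mu0 < 1) (hrho : 2^-1 < rho < 1) (hpi : 0 < pi < 1)
  (hc : 0 < c) (hk : 0 < k) (m : mech) :
  exists m' : mech,
    IC mu0 rho pi c m' /\
    forall w1 w2 u1 u2 : bool,
      outcome mu0 rho pi c m' w1 w2 u1 u2 = outcome mu0 rho pi c m w1 w2 u1 u2.
Proof.
have unit_le (x : R) : 0 < x < 1 -> 0 <= x <= 1 by case/andP=> /ltW-> /ltW.
have mu0_01 := unit_le _ hmu0; have pi_01 := unit_le _ hpi.
have rho_01 : 0 <= rho <= 1.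
  case/andP: hrho => half_lt /ltW ->; rewrite andbT ltW //.
  by rewrite (@lt_trans _ _ 2^-1) // invr_gt0.
exists (direct_mech mu0 rho pi c m).
by split; [exact: direct_IC | exact: direct_outcome].
Qed.
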